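(* Let $a$ be a positive integer and let $L_{a,a} = \{C_{i,1} : 1 \le i \le a+1\} \cup \{C_{1,j} : 1 < j \le a+1\}$, of size $n = 2a+1$. Then on the $n \times n$ board, $\mathrm{cp}_{\mathrm{free}}(L_{a,a}) = 2$.
   Context: For integers $i,j$, $C_{i,j}$ denotes the unit square cell in column $i$ and row $j$ of the integer grid (columns numbered left to right, rows numbered top to bottom). A polyomino is a finite set of cells; its size is its number of cells. For a polyomino $\mathcal{P}$ of size $n$ the board is $\mathbb{B} = \{C_{i,j} : 1 \le i,j \le n\}$. The shift of $\mathcal{P}$ by integers $(c,d)$ is $\mathcal{P}+(c,d) = \{C_{x+c,y+d} : C_{x,y} \in \mathcal{P}\}$. For $0<a\le b$ and $L_{a,b} = \{C_{i,1} : 1 \le i \le a+1\} \cup \{C_{1,j} : 1 < j \le b+1\}$, the rotations by $90^\circ, 180^\circ, 270^\circ$ clockwise are $LR_{a,b} = \{C_{i,1} : 1 \le i \le b+1\} \cup \{C_{b+1,j} : 1 \le j \le a+1\}$, $LR^2_{a,b} = \{C_{i,b+1} : 1 \le i \le a+1\} \cup \{C_{a+1,j} : 1 \le j \le b+1\}$, $LR^3_{a,b} = \{C_{i,a+1} : 1 \le i \le b+1\} \cup \{C_{1,j} : 1 \le j \le a+1\}$ (reflections are not allowed). A free copy of $L_{a,b}$ is any shift of one of these four. A set of polyominoes is a valid arrangement if each is contained in $\mathbb{B}$ and they are pairwise disjoint. A free packing of $\mathcal{P}$ is a set of free copies of $\mathcal{P}$ forming a valid arrangement such that adding any further free copy of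 $\mathcal{P}$ yields an invalid arrangement. The clumsy free packing number $\mathrm{cp}_{\mathrm{free}}(\mathcal{P})$ is the minimum number of polyominoes in a free packing of $\mathcal{P}$ on the $n \times n$ board. *)

From Stdlib Require Import ZArith List.
Import ListNotations.
Open Scope Z_scope.

(* A cell C_{i,j} is (i, j): column i, row j. Sets of cells are predicates. *)
Definition cell := (Z * Z)%type.
Definition cellset := cell -> Prop.

(* L_{a,b} and its clockwise rotations LR, LR^2, LR^3, exactly as in the paper. *)
Definition Lab (a b : Z) : cellset := fun '(i, j) =>
  (j = 1 /\ 1 <= i <= a + 1) \/ (i = 1 /\ 1 < j <= b + 1).
Definition LR (a b : Z) : cellset := fun '(i, j) =>
  (j = 1 /\ 1 <= i <= b + 1) \/ (i = b + 1 /\ 1 <= j <= a + 1).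
Definition LR2 (a b : Z) : cellset := fun '(i, j) =>
  (j = b + 1 /\ 1 <= i <= a + 1) \/ (i = a + 1 /\ 1 <= j <= b + 1).
Definition LR3 (a b : Z) : cellset := fun '(i, j) =>
  (j = a + 1 /\ 1 <= i <= b + 1) \/ (i = 1 /\ 1 <= j <= a + 1).

Definition shift (P : cellset) (c d : Z) : cellset := fun '(i, j) =>
  P (i - c, j - d).

(* A free copy of L_{a,b} is given by a rotation and a shift vector. *)
Inductive rot := R0 | R1 | R2 | R3.
Definition rotated (a b : Z) (r : rot) : cellset :=
  match r with R0 => Lab a b | R1 => LR a b | R2 => LR2 a b | R3 => LR3 a b end.
Definition copy := (rot * Z * Z)%type.
Definition cells_of (a b : Z) (q : copy) : cellset :=
  let '(r, c, d) := q in shift (rotated a b r) c d.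

Definition board (n : Z) : cellset := fun '(i, j) => 1 <= i <= n /\ 1 <= j <= n.

Definition contained (P Q : cellset) : Prop := forall x, P x -> Q x.
Definition disjoint (P Q : cellset) : Prop := forall x, ~ (P x /\ Q x).

(* Since copies are nonempty, disjointness forces the listed copies to be
   distinct as sets, so the length of the list is the number of polyominoes. *)
Definition valid_arrangement (a b n : Z) (S : list copy) : Prop :=
  Forall (fun q => contained (cells_of a b q) (board n)) S /\
  ForallOrdPairs (fun q q' => disjoint (cells_of a b q) (cells_of a b q')) S.

(* Size of L_{a,b} is a+b+1, so the board is (a+b+1) x (a+b+1). *)
Definition free_packing (a b : Z) (S : list copy) : Prop :=
  let n := a + b + 1 in
  valid_arrangement a b n S /\
  forall q : copy, ~ valid_arrangement a b n (q :: S).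

Definition cp_free_eq (a b : Z) (k : nat) : Prop :=
  (exists S, free_packing a b S /\ length S = k) /\
  (forall S, free_packing a b S -> (k <= length S)%nat).

From Stdlib Require Import ZArith List Lia.
Import ListNotations.
Open Scope Z_scope.

(* Every copy of L_{a,a} lies in an (a+1) x (a+1) box, which is too narrow to
   reach both the first and the last column of the (2a+1) x (2a+1) board, and
   likewise for rows.  Hence a single copy misses one of the four L's hugging a
   corner of the board along its two boundary lines, so no packing has fewer
   than two copies.  Conversely, the unrotated L's shifted by (0, a-1) and
   (a, a) form a packing: a copy inside the board has its shift in [0, a]^2,
   and then, whatever its rotation, it shares a cell with one of the two. *)

Lemma valid_arrangement_nil a b n : valid_arrangement a b n [].
Proof. split; constructor. Qed.

Lemma valid_arrangement_cons a b n q S :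
  valid_arrangement a b n (q :: S) <->
  contained (cells_of a b q) (board n) /\
  Forall (fun q' => disjoint (cells_of a b q) (cells_of a b q')) S /\
  valid_arrangement a b n S.
Proof.
  split.
  - intros [HF HP]; inversion HF; inversion HP; subst; repeat split; assumption.
  - intros (Hq & Hdisj & HF & HP); split; constructor; assumption.
Qed.

Lemma cells_of_box a r c d i j : 0 <= a -> cells_of a a (r, c, d) (i, j) ->
  c + 1 <= i <= c + a + 1 /\ d + 1 <= j <= d + a + 1.
Proof. intros Ha; destruct r; simpl; lia. Qed.

Lemma cells_of_span a r c d : 0 <= a ->
  exists j1 j2 i1 i2,
    cells_of a a (r, c, d) (c + 1, j1) /\ cells_of a a (r, c, d) (c + a + 1, j2) /\
    cells_of a a (r, c, d) (i1, d + 1) /\ cells_of a a (r, c, d) (i2, d + a + 1).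
Proof.
  intros Ha; destruct r.
  - exists (d + 1), (d + 1), (c + 1), (c + 1); simpl; lia.
  - exists (d + 1), (d + 1), (c + 1), (c + a + 1); simpl; lia.
  - exists (d + a + 1), (d + a + 1), (c + a + 1), (c + 1); simpl; lia.
  - exists (d + a + 1), (d + a + 1), (c + 1), (c + 1); simpl; lia.
Qed.

Lemma contained_board_shift a r c d : 0 <= a ->
  contained (cells_of a a (r, c, d)) (board (a + a + 1)) ->
  0 <= c <= a /\ 0 <= d <= a.
Proof.
  intros Ha Hin.
  destruct (cells_of_span a r c d Ha) as (j1 & j2 & i1 & i2 & H1 & H2 & H3 & H4).
  apply Hin in H1, H2, H3, H4; simpl in *; lia.
Qed.

Section EqualArms.

Variable a : Z.
Hypothesis ha : 0 < a.

Definition edge (low : bool) : Z := if low then 1 else a + a + 1.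

Definition corner_copy (left top : bool) : copy :=
  match left, top with
  | true, true => (R0, 0, 0)
  | false, true => (R1, a, 0)
  | true, false => (R3, 0, a)
  | false, false => (R2, a, a)
  end.

Lemma corner_copy_cells left top i j :
  cells_of a a (corner_copy left top) (i, j) -> i = edge left \/ j = edge top.
Proof. destruct left, top; simpl; lia. Qed.

Lemma corner_copy_contained left top :
  contained (cells_of a a (corner_copy left top)) (board (a + a + 1)).
Proof. intros [i j]; destruct left, top; simpl; lia. Qed.

Lemma exists_disjoint_corner_copy q :
  exists left top, disjoint (cells_of a a (corner_copy left top)) (cells_of a a q).
Proof.
  destruct q as [[r c] d].
  exists (0 <? c), (0 <? d).
  intros [i j] [Hcorner Hq].
  apply corner_copy_cells in Hcorner.
  apply cells_of_box in Hq; [| lia].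
  destruct (Z.ltb_spec 0 c), (Z.ltb_spec 0 d); simpl in Hcorner; lia.
Qed.

Lemma free_packing_length_ge_2 S : free_packing a a S -> (2 <= length S)%nat.
Proof.
  intros [Hvalid Hmax].
  destruct S as [| q [| q' S]]; simpl; [exfalso.. | lia].
  - apply (Hmax (corner_copy true true)), valid_arrangement_cons.
    split; [apply corner_copy_contained |].
    split; [constructor | apply valid_arrangement_nil].
  - destruct (exists_disjoint_corner_copy q) as (left & top & Hdisj).
    apply (Hmax (corner_copy left top)), valid_arrangement_cons.
    split; [apply corner_copy_contained |].
    split; [constructor; [exact Hdisj | constructor] | exact Hvalid].
Qed.

Definition two_copy_packing : list copy := [(R0, 0, a - 1); (R0, a, a)].

Lemma two_copy_packing_valid : valid_arrangement a a (a + a + 1) two_copy_packing.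
Proof.
  apply valid_arrangement_cons; split; [| split].
  - intros [i j]; simpl; lia.
  - constructor; [| constructor]; intros [i j]; simpl; lia.
  - apply valid_arrangement_cons; split; [| split].
    + intros [i j]; simpl; lia.
    + constructor.
    + apply valid_arrangement_nil.
Qed.

Lemma two_copy_packing_blocks q :
  contained (cells_of a a q) (board (a + a + 1)) ->
  exists x, cells_of a a q x /\
    (cells_of a a (R0, 0, a - 1) x \/ cells_of a a (R0, a, a) x).
Proof.
  destruct q as [[r c] d]; intros Hin.
  destruct (contained_board_shift a r c d ltac:(lia) Hin) as [Hc Hd].
  destruct r.
  - destruct (Z.eq_dec d a).
    + exists (a + 1, a + 1); simpl; lia.
    + exists (c + 1, a); simpl; lia.
  - exists (c + a + 1, a + 1); simpl; lia.
  - exists (c + a + 1, a + 1); simpl; lia.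
  - destruct (Z.eq_dec d a).
    + exists (a + 1, a + a + 1); simpl; lia.
    + exists (c + 1, a); simpl; lia.
Qed.

Lemma two_copy_packing_free : free_packing a a two_copy_packing.
Proof.
  split; [exact two_copy_packing_valid |].
  intros q Hvalid; apply valid_arrangement_cons in Hvalid as (Hin & Hdisj & _).
  destruct (two_copy_packing_blocks q Hin) as (x & Hq & Hw).
  inversion Hdisj as [| ? ? Hdisj1 Hrest]; inversion Hrest as [| ? ? Hdisj2 _].
  destruct Hw as [Hw | Hw]; [apply (Hdisj1 x) | apply (Hdisj2 x)]; tauto.
Qed.

End EqualArms.

Theorem theorem4 (a : Z) (ha : (0 < a)%Z) : cp_free_eq a a 2.
Proof.
  split.
  - exists (two_copy_packing a); split; [exact (two_copy_packing_free a ha) | reflexivity].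
  - exact (free_packing_length_ge_2 a ha).
Qed.
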